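(* Let $X$ be a real random variable taking values in the interval $\mathcal{I}\subseteq\mathbb{R}$, and let $h:\mathcal{I}\to\mathcal{J}$ have a non-decreasing upper tail with threshold $c\in(\inf\mathcal{I},\sup\mathcal{I})$. Let $h^{\star}=\sup_{x<c,\,x\in\mathcal{I}}h(x)$, $\pi_c=\mathbb{P}[h(X)\le h^{\star}]$, and define $\tilde h:\mathcal{I}\to\mathcal{J}$ by $\tilde h(x)=h^{\star}$ if $x<c$, $\tilde h(c)=\max\{h(c),h^{\star}\}$, and $\tilde h(x)=h(x)$ if $x>c$. Then $$\mathbb{P}[\tilde h(X)\le y]=\mathbb{P}[h(X)\le y]\quad\text{for all } y\ge h^{\star},$$ and in particular $\mathbb{P}[\tilde h(X)\le h^{\star}]=\pi_c$.
   Context: $\mathcal{I},\mathcal{J}\subseteq\mathbb{R}$, $h$ real-valued whose discontinuities (if any) are jumps at which it is left- or right-continuous. A function $h:\mathcal{I}\to\mathcal{J}$ has a non-decreasing upper tail if there exists $x'\in\mathcal{I}$ such that (1) $h(x)\le h(x')$ for all $x\in\mathcal{I}$ with $x<x'$, and (2) $h(x_1)\le h(x_2)$ for all $x_1,x_2\in\mathcal{I}$ with $x'\le x_1\le x_2$. Its threshold $c$ is the infimum of the (assumed nonempty) set of all such $x'$. *)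

From HB Require Import structures.
From mathcomp Require Import all_boot all_order all_algebra.
From mathcomp Require Import all_classical all_reals all_analysis.
Set Implicit Arguments. Unset Strict Implicit. Unset Printing Implicit Defensive.
Import Order.TTheory GRing.Theory Num.Theory.
Local Open Scope classical_set_scope.
Local Open Scope ring_scope.

Section Defs.
Variable R : realType.

Definition left_cont_in (I : interval R) (h : R -> R) (x : R) :=
  forall e : R, 0 < e -> exists2 d : R, 0 < d &
    forall y, y \in I -> x - d < y <= x -> `|h y - h x| < e.
Definition right_cont_in (I : interval R) (h : R -> R) (x : R) :=
  forall e : R, 0 < e -> exists2 d : R, 0 < d &
    forall y, y \in I -> x <= y < x + d -> `|h y - h x| < e.
Definition has_left_lim_in (I : interval R) (h : R -> R) (x : R) :=
  exists l : R, forall e : R, 0 < e -> exists2 d : R, 0 < d &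
    forall y, y \in I -> x - d < y < x -> `|h y - l| < e.
Definition has_right_lim_in (I : interval R) (h : R -> R) (x : R) :=
  exists l : R, forall e : R, 0 < e -> exists2 d : R, 0 < d &
    forall y, y \in I -> x < y < x + d -> `|h y - l| < e.

Definition jump_regular (I : interval R) (h : R -> R) :=
  forall x, x \in I ->
    [/\ has_left_lim_in I h x, has_right_lim_in I h x &
        left_cont_in I h x \/ right_cont_in I h x].

Definition upper_tail_point (I : interval R) (h : R -> R) (x' : R) :=
  [/\ x' \in I,
      (forall x, x \in I -> x < x' -> h x <= h x') &
      (forall x1 x2, x1 \in I -> x2 \in I -> x' <= x1 -> x1 <= x2 -> h x1 <= h x2)].

Definition nondec_upper_tail (I : interval R) (h : R -> R) :=
  exists x', upper_tail_point I h x'.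

Definition is_threshold (I : interval R) (h : R -> R) (c : R) :=
  (forall x', upper_tail_point I h x' -> c <= x') /\
  (forall b, (forall x', upper_tail_point I h x' -> b <= x') -> b <= c).

Definition hstar (I : interval R) (h : R -> R) (c : R) : R :=
  sup (h @` [set x | x \in I /\ x < c]).

Definition htilde (I : interval R) (h : R -> R) (c : R) (x : R) : R :=
  if x < c then hstar I h c
  else if x == c then Num.max (h c) (hstar I h c)
  else h x.

End Defs.

From HB Require Import structures.
From mathcomp Require Import all_boot all_order all_algebra.
From mathcomp Require Import all_classical all_reals all_analysis.
Import Order.TTheory GRing.Theory Num.Theory.
Local Open Scope classical_set_scope.
Local Open Scope ring_scope.

(* Any tail witness x' lies at or above the threshold c, so h x <= h x' for
   every x < c in I; hence h is bounded by h^* below c. *)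

Section upper_tail.
Variables (R : realType) (I : interval R) (h : R -> R) (c : R).

Lemma le_hstar (x' x : R) : upper_tail_point I h x' -> c <= x' ->
  x \in I -> x < c -> h x <= hstar I h c.
Proof.
move=> [x'I below_x' _] cx' xI xc.
apply: sup_upper_bound; last by exists x.
split; first by exists (h x), x.
exists (h x') => _ [z [zI zc] <-].
by apply: below_x' => //; apply: lt_le_trans cx'.
Qed.

Lemma htilde_le (x y : R) :
  (forall z, z \in I -> z < c -> h z <= hstar I h c) ->
  hstar I h c <= y -> x \in I -> (htilde I h c x <= y) = (h x <= y).
Proof.
move=> below_c hy xI; rewrite /htilde.
have [xc|cx] := ltP x c; first by rewrite hy (le_trans (below_c x xI xc) hy).
by case: eqVneq => [->|//]; rewrite ge_max hy andbT.
Qed.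

End upper_tail.

Theorem lemma3p2 (R : realType) (d : measure_display) (T : measurableType d)
  (P : probability T R) (X : {RV P >-> R})
  (I : interval R) (J : set R) (h : R -> R) (c : R)
  (hX : forall w, X w \in I)
  (hJ : forall x, x \in I -> J (h x))
  (hreg : jump_regular I h)
  (htail : nondec_upper_tail I h)
  (hc : is_threshold I h c)
  (hcinf : exists2 a, a \in I & a < c)
  (hcsup : exists2 b, b \in I & c < b) :
  (forall y : R, hstar I h c <= y ->
     P [set w | htilde I h c (X w) <= y] = P [set w | h (X w) <= y]) /\
  P [set w | htilde I h c (X w) <= hstar I h c]
    = P [set w | h (X w) <= hstar I h c].
Proof.
have [x' x'_tail] := htail.
have below_c x : x \in I -> x < c -> h x <= hstar I h c.
  exact: le_hstar x'_tail (hc.1 _ x'_tail).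
have cdf_eq y : hstar I h c <= y ->
    P [set w | htilde I h c (X w) <= y] = P [set w | h (X w) <= y].
  by move=> hy; congr (P _); apply/seteqP; split=> w /=; rewrite htilde_le.
by split; [exact: cdf_eq | exact: cdf_eq].
Qed.
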